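(* Let $G$ be a group and let $V$ be a finite-dimensional vector space. Let $\tau\in\mathrm{LNUCA}_c(G,V)$ be stably injective. Then there exists $\sigma\in\mathrm{LNUCA}_c(G,V)$ such that $\sigma\circ\tau=\mathrm{Id}$.
   Context: For $g\in G$ and $x\in V^G$, $(gx)(h)=x(g^{-1}h)$. For finite $M\subset G$, $S=\mathcal{L}(V^M,V)$ and $s\in S^G$, $\sigma_s\colon V^G\to V^G$ is $\sigma_s(x)(g)=s(g)((g^{-1}x)\vert_M)$. $\mathrm{LNUCA}_c(G,V)$ is the set of maps $\sigma_s$ with $M$ finite and $s\in S^G$ constant outside some finite subset of $G$. For $s\in S^G$, $\Sigma(s)$ is the closure of $\{gs:g\in G\}$ in $S^G$ for the prodiscrete topology. $\tau=\sigma_s$ is stably injective if $\sigma_p$ is injective for every $p\in\Sigma(s)$. *)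

From HB Require Import structures.
From mathcomp Require Import all_boot all_order all_algebra.
From mathcomp Require Import finmap.
Set Implicit Arguments. Unset Strict Implicit. Unset Printing Implicit Defensive.
Import GRing.Theory.

Section LNUCA.
Variables (G : groupType) (K : fieldType) (V : vectType K).

Definition shift (g : G) (x : G -> V) : G -> V := fun h => x (g^-1 * h)%g.

Definition shiftS (S : Type) (g : G) (s : G -> S) : G -> S :=
  fun h => s (g^-1 * h)%g.

Definition restr (M : {fset G}) (x : G -> V) : {ffun M -> V} :=
  [ffun m : M => x (val m)].

Definition Sym (M : {fset G}) := {linear {ffun M -> V} -> V}.

Definition sigma (M : {fset G}) (s : G -> Sym M) (x : G -> V) : G -> V :=
  fun g => s g (restr M (shift g^-1 x)).

Definition asym_const (S : Type) (s : G -> S) : Prop :=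
  exists F : {fset G}, forall g h, g \notin F -> h \notin F -> s g = s h.

Definition LNUCAc (tau : (G -> V) -> (G -> V)) : Prop :=
  exists (M : {fset G}) (s : G -> Sym M), asym_const s /\ tau = sigma s.

(* p belongs to Sigma(s), the closure of the G-orbit of s in S^G for the
   prodiscrete topology (basic open sets = cylinders over finite subsets) *)
Definition in_orbit_closure (S : Type) (s p : G -> S) : Prop :=
  forall F : {fset G}, exists g : G, forall h, h \in F -> shiftS g s h = p h.

Definition stably_injective (M : {fset G}) (s : G -> Sym M) : Prop :=
  forall p : G -> Sym M, in_orbit_closure s p -> injective (sigma p).

End LNUCA.

From HB Require Import structures.
From mathcomp Require Import all_boot all_order all_algebra.
From mathcomp Require Import finmap.
From mathcomp Require Import boolp classical_sets.
Set Implicit Arguments. Unset Strict Implicit. Unset Printing Implicit Defensive.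
Import GRing.Theory.

(* An injective linear map T on V^G whose coordinates each depend on finitely
   many inputs has finite memory: x(g) is determined, linearly, by T x on a
   finite set.  This is a compactness argument: partial assignments all of
   whose finite parts are consistent with T x = 0 form a system of finite
   character, so Tukey's lemma yields total solutions, and one extends such an
   assignment at a new point by stabilising a decreasing family of subspaces
   of the finite-dimensional space V.
   Applied to sigma_s this gives a local linear left inverse at each g.  Far
   from the finite set where s is not constant, sigma_s acts like sigma_p for
   the constant configuration p, which lies in Sigma(s) when G is infinite and
   is therefore injective as well; one window and one linear rule then serve
   all but finitely many g, so the left inverse is again in LNUCA_c. *)

Local Open Scope classical_set_scope.
Local Open Scope ring_scope.

Section FiniteCharacter.
Variable T : eqType.

Lemma chain_cover (A0 : set T) (F : set (set T)) (s : seq T) :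
  total_on F subset -> [set` s] `<=` A0 `|` \bigcup_(X in F) X ->
  [set` s] `<=` A0 \/ exists2 X, F X & [set` s] `<=` A0 `|` X.
Proof.
move=> Ftot; elim: s => [|e s IH] sub; first by left.
have {}IH := IH (fun x xs => sub x (@mem_behead _ (e :: s) x xs)).
have cons_sub (X : set T) : X e -> [set` s] `<=` X -> [set` e :: s] `<=` X.
  by move=> Xe sX x /=; rewrite inE => /orP[/eqP ->|/sX].
case: (sub e (mem_head e s)) => [eA0|[Y FY eY]].
  case: IH => [sA0|[X FX sX]]; first by left; apply: cons_sub.
  by right; exists X => //; apply: cons_sub => //; left.
right; case: IH => [sA0|[X FX sX]].
  by exists Y => //; apply: cons_sub; [right|move=> x /sA0; left].
have [XY|YX] := Ftot _ _ FX FY.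
  by exists Y => //; apply: cons_sub; [right|move=> x /sX [|/XY]; [left|right]].
by exists X => //; apply: cons_sub; [right; apply: YX|].
Qed.

Variable P : set T -> Prop.
Hypothesis P_fin : forall A, P A <-> forall s : seq T, [set` s] `<=` A -> P [set` s].

Lemma Tukey A0 : P A0 -> exists A, [/\ A0 `<=` A, P A & forall B, A `<` B -> ~ P B].
Proof.
move=> PA0.
have chainP F : F `<=` (fun B => P (A0 `|` B)) -> total_on F subset ->
    P (A0 `|` \bigcup_(X in F) X).
  move=> FP Ftot; apply/P_fin => s /(chain_cover Ftot) [sA0|[X FX sX]].
    by move/P_fin: PA0; apply.
  by move/P_fin: (FP X FX); apply.
have [B [PB Bmax]] := Zorn_bigcup chainP.
exists (A0 `|` B); split=> [|//|C [ABC CAB] PC]; first exact: subsetUl.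
apply: (Bmax C); last by rewrite setUidr // => x A0x; apply: ABC; left.
by split=> [x Bx|CB]; [apply: ABC; right|apply: CAB => x /CB; right].
Qed.

End FiniteCharacter.

Section SubspacePred.
Variables (K : fieldType) (W : vectType K) (P : W -> Prop).
Hypotheses (P0 : P 0) (P_comb : forall a u v, P u -> P v -> P (a *: u + v)).

Lemma span_pred (l : seq W) : {in l, forall w, P w} -> forall w, w \in <<l>>%VS -> P w.
Proof.
elim: l => [|u l IH] Pl w; first by rewrite span_nil memv0 => /eqP ->.
rewrite span_cons => /memv_addP[_ /vlineP[a ->] [v lv ->]].
apply: P_comb; first by apply: Pl; rewrite mem_head.
by apply: IH => // x lx; apply: Pl; rewrite inE lx orbT.
Qed.

Lemma vspace_pred : exists U : {vspace W}, forall w, w \in U <-> P w.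
Proof.
pose spans n := `[< exists l : seq W, {in l, forall w, P w} /\ \dim <<l>>%VS = n >].
have spans0 : exists n, spans n.
  by exists 0%N; apply/asboolP; exists [::]; rewrite span_nil dimv0.
have spans_le n : spans n -> (n <= \dim {:W})%N.
  by move=> /asboolP[l [_ <-]]; apply/dimvS/subvf.
case: (ex_maxnP spans0 spans_le) => n /asboolP[l [Pl <-]] lmax.
exists <<l>>%VS => w; split; first exact: span_pred.
move=> Pw; apply/negPn/negP => lw.
have /lmax : spans (\dim <<w :: l>>%VS).
  by apply/asboolP; exists (w :: l); split=> // x; rewrite inE => /predU1P[->|/Pl].
apply/negP; rewrite -ltnNge span_cons (ltn_leqif (dimv_leqif_sup (addvSr _ _))).
by rewrite subv_add subvv andbT -memvE.
Qed.

End SubspacePred.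

Section LinearRelation.
Variables (K : fieldType) (W V : vectType K) (P : W -> V -> Prop).
Hypotheses (P00 : P 0 0)
  (P_comb : forall a w1 v1 w2 v2, P w1 v1 -> P w2 v2 -> P (a *: w1 + w2) (a *: v1 + v2))
  (P_fun0 : forall v, P 0 v -> v = 0).

Lemma linear_relation_functional w v1 v2 : P w v1 -> P w v2 -> v1 = v2.
Proof.
move=> wv1 wv2; have := P_comb (-1) wv2 wv1; rewrite !scaleN1r addNr => /P_fun0.
by move/eqP; rewrite addrC subr_eq0 => /eqP.
Qed.

Lemma linear_relation_extension : exists l : {linear W -> V}, forall w v, P w v -> l w = v.
Proof.
have [U memU] := vspace_pred (P := fun w => exists v, P w v) (ex_intro _ 0 P00)
  (fun a _ _ '(ex_intro v1 P1) '(ex_intro v2 P2) => ex_intro _ _ (P_comb a P1 P2)).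
pose g w := xget 0 (P w).
have gP w : w \in U -> P w (g w) by move=> /memU; apply: xgetPex.
pose f w := g (projv U w).
have f_lin : linear f.
  move=> a u v; rewrite /f linearD linearZ.
  have [Pu Pv] := (gP _ (memv_proj U u), gP _ (memv_proj U v)).
  apply: (linear_relation_functional _ (P_comb a Pu Pv)); apply: gP.
  by rewrite memvD ?memvZ ?memv_proj.
pose fL : {linear W -> V} := HB.pack f (GRing.isLinear.Build _ _ _ _ f f_lin).
exists fL => w v wv /=.
have Uw : w \in U by apply/memU; exists v.
by rewrite /f projv_id //; apply: (linear_relation_functional _ wv); apply: gP.
Qed.

End LinearRelation.

Section LocalOperator.
Variables (G : choiceType) (K : fieldType) (V : vectType K).
Variable T : (G -> V) -> G -> V.
Hypothesis T_comb : forall a x y n, T (fun h => a *: x h + y h) n = a *: T x n + T y n.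
Hypothesis T_local : forall n, exists D : {fset G},
  forall x y, {in D, x =1 y} -> T x n = T y n.

Lemma locop_ext x y n : x =1 y -> T x n = T y n.
Proof. by move=> xy; have [D TD] := T_local n; apply: TD => h _; apply: xy. Qed.

Lemma locop0 n : T (fun _ => 0) n = 0.
Proof.
have -> : T (fun _ => 0) n = T (fun _ => (-1) *: 0 + 0) n.
  by apply: locop_ext => h; rewrite scaler0 addr0.
by rewrite T_comb scaleN1r addNr.
Qed.

Lemma locopB x y n : T (fun h => x h - y h) n = T x n - T y n.
Proof.
have -> : T (fun h => x h - y h) n = T (fun h => (-1) *: y h + x h) n.
  by apply: locop_ext => h; rewrite scaleN1r addrC.
by rewrite T_comb scaleN1r addrC.
Qed.

Definition solves (N : {fset G}) (s : seq (G * V)) (x : G -> V) :=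
  {in N, forall n, T x n = 0} /\ {in s, forall e, x e.1 = e.2}.

(* A relation [r] encodes a partial assignment; it need not be functional,
   since [fin_solvable r] forces that. *)
Definition fin_solvable (r : set (G * V)) :=
  forall N s, [set` s] `<=` r -> exists x, solves N s x.

Lemma fin_solvableP r :
  fin_solvable r <-> forall s : seq (G * V), [set` s] `<=` r -> fin_solvable [set` s].
Proof.
split=> [rS s sr N t ts|sS N s /sS/(_ N s)]; last by apply.
by apply: rS => e /ts/sr.
Qed.

Definition kernel_value (N : {fset G}) (s : seq (G * V)) g u :=
  exists y, [/\ {in N, forall n, T y n = 0}, {in s, forall e, y e.1 = 0} & y g = u].

Lemma kernel_value_vspace N s g :
  exists U : {vspace V}, forall u, u \in U <-> kernel_value N s g u.
Proof.
apply: vspace_pred; first by exists (fun _ => 0); split=> // n _; apply: locop0.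
move=> a _ _ [y1 [N1 s1 <-]] [y2 [N2 s2 <-]]; exists (fun h => a *: y1 h + y2 h).
by split=> [n Nn|e se|//]; rewrite ?T_comb ?N1 ?N2 ?s1 ?s2 // scaler0 addr0.
Qed.

(* The subspaces [kernel_value N s g] of V shrink as [(N, s)] grows, so one of
   minimal dimension is already their limit. *)
Lemma kernel_value_stable r g : exists N0 s0, [set` s0] `<=` r /\
  forall N s, (N0 `<=` N)%fset -> {subset s0 <= s} -> [set` s] `<=` r ->
  forall u, kernel_value N0 s0 g u -> kernel_value N s g u.
Proof.
have [Kv Kv_mem] := choice (fun p : {fset G} * seq (G * V) => kernel_value_vspace p.1 p.2 g).
pose dims n := `[< exists p, [set` p.2] `<=` r /\ \dim (Kv p) = n >].
have dims0 : exists n, dims n.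
  by exists (\dim (Kv (fset0, [::]))); apply/asboolP; exists (fset0, [::]).
case: (ex_minnP dims0) => _ /asboolP[[N0 s0] [s0r <-]] Kv_min.
exists N0, s0; split=> // N s N0N s0s sr u.
have sub : (Kv (N, s) <= Kv (N0, s0))%VS.
  apply/subvP => v /Kv_mem[y [Ny sy yg]]; apply/Kv_mem; exists y.
  by split=> // [n /(fsubsetP N0N)/Ny|e /s0s/sy].
have KvE : Kv (N, s) = Kv (N0, s0).
  by apply/eqP; rewrite eqEdim sub Kv_min //; apply/asboolP; exists (N, s).
by move=> /(Kv_mem (N0, s0)); rewrite -KvE => /Kv_mem.
Qed.

Lemma fin_solvable_ext r g : fin_solvable r -> exists N0 s0, [set` s0] `<=` r /\
  forall x0, solves N0 s0 x0 -> fin_solvable (r `|` [set (g, x0 g)]).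
Proof.
move=> rS; have [N0 [s0 [s0r stable]]] := kernel_value_stable r g.
exists N0, s0; split=> // x0 [N0x0 s0x0] N s sr.
pose s1 := s0 ++ [seq e <- s | e != (g, x0 g)].
have s0s1 : {subset s0 <= s1} by move=> e s0e; rewrite mem_cat s0e.
have s1r : [set` s1] `<=` r.
  move=> e /=; rewrite mem_cat => /orP[/s0r //|].
  by rewrite mem_filter => /andP[ne /sr[//|/= eE]]; rewrite eE eqxx in ne.
have [x1 [N1x1 s1x1]] := rS (N `|` N0)%fset s1 s1r.
have : kernel_value N0 s0 g (x1 g - x0 g).
  exists (fun h => x1 h - x0 h); split=> // [n N0n|e s0e].
    by rewrite locopB N1x1 ?N0x0 ?subrr // in_fsetU N0n orbT.
  by rewrite s1x1 ?s0x0 ?subrr ?s0s1.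
case/(stable _ _ (fsubsetUr N N0) s0s1 s1r) => y [Ny s1y yg].
exists (fun h => x1 h - y h); split=> [n Nn|e se].
  by rewrite locopB N1x1 ?Ny ?subrr // in_fsetU Nn.
have [-> /=|ne] := eqVneq e (g, x0 g); first by rewrite yg opprB addrC subrK.
by rewrite s1x1 ?s1y ?subr0 // mem_cat mem_filter ne se orbT.
Qed.

Lemma fin_solvable_extend r g : fin_solvable r -> exists v, fin_solvable (r `|` [set (g, v)]).
Proof.
move=> rS; have [N0 [s0 [s0r ext]]] := fin_solvable_ext g rS.
by have [x0 x0S] := rS N0 s0 s0r; exists (x0 g); apply: ext.
Qed.

Lemma fin_solvable_solution r : fin_solvable r ->
  exists x, (forall n, T x n = 0) /\ forall e, r e -> x e.1 = e.2.
Proof.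
move=> rS; have [A [rA AS Amax]] := Tukey fin_solvableP rS.
have A_total h : exists v, A (h, v).
  have [v AvS] := fin_solvable_extend h AS; exists v.
  apply: contrapT => Av; apply: (Amax _ _ AvS).
  by split=> [e Ae|/(_ (h, v) (or_intror erefl))]; [left|].
have [x Ax] := choice A_total.
have A_x e : A e -> x e.1 = e.2.
  move=> Ae; have /(AS fset0)[y [_ ys]] : [set` [:: e; (e.1, x e.1)]] `<=` A.
    by move=> e' /=; rewrite !inE => /predU1P[->|/eqP ->].
  by rewrite -(ys e) ?mem_head // (ys (e.1, x e.1)) // !inE eqxx orbT.
exists x; split=> [n|e /rA]; last exact: A_x.
have [D TD] := T_local n.
have /(AS [fset n]%fset)[y [Ny Dy]] : [set` [seq (d, x d) | d <- enum_fset D]] `<=` A.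
  by move=> _ /= /mapP[d _ ->].
rewrite (TD x y) ?Ny ?fset11 // => d Dd.
by rewrite (Dy (d, x d)) //; apply: map_f.
Qed.

Hypothesis T_inj : injective T.

Lemma locop_memory g : exists N : {fset G},
  forall x, {in N, forall n, T x n = 0} -> x g = 0.
Proof.
have set0S : fin_solvable set0.
  by move=> N s s0; exists (fun _ => 0); split=> [n _|e /s0]; first exact: locop0.
have [N0 [s0 [s00 ext]]] := fin_solvable_ext g set0S.
exists N0 => x N0x.
have [|z [Tz zx]] := fin_solvable_solution (ext x _).
  by split=> // e /s00.
have z0 : z = fun _ => 0 by apply: T_inj; apply/funext => n; rewrite Tz locop0.
by rewrite -[x g](zx (g, x g)) ?z0 //; right.
Qed.

End LocalOperator.

Section CellularAutomata.
Variables (G : groupType) (K : fieldType) (V : vectType K).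

Lemma restr_shift (N : {fset G}) g (x : G -> V) :
  restr N (shift g^-1 x) = [ffun k : N => x (g * val k)%g].
Proof. by apply/ffunP => k; rewrite !ffunE /shift invgK. Qed.

Lemma sigma_comb (M : {fset G}) (p : G -> Sym V M) a x y n :
  sigma p (fun h => a *: x h + y h) n = a *: sigma p x n + sigma p y n.
Proof. by rewrite /sigma -linearP; congr (p n _); apply/ffunP => k; rewrite !ffunE. Qed.

Lemma sigma_local (M : {fset G}) (p : G -> Sym V M) n : exists D : {fset G},
  forall x y, {in D, x =1 y} -> sigma p x n = sigma p y n.
Proof.
exists [fset (n * m)%g | m in M]%fset => x y xy.
rewrite /sigma !restr_shift; congr (p n _); apply/ffunP => k; rewrite !ffunE.
by apply: xy; apply: in_imfset; apply: fsvalP.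
Qed.

Lemma sigma_shift (M : {fset G}) (s p : G -> Sym V M) g n x :
  s (g * n)%g = p n -> sigma s x (g * n)%g = sigma p (shift g^-1 x) n.
Proof.
move=> spn; rewrite /sigma spn !restr_shift; congr (p n _).
by apply/ffunP => k; rewrite !ffunE /shift invgK mulgA.
Qed.

Lemma sigma_window_inverse (M : {fset G}) (p : G -> Sym V M) (N D : {fset G}) g :
  (forall x, {in D, forall n, sigma p x n = 0} -> x g = 0) ->
  {in D, forall n, (g^-1 * n)%g \in N} ->
  exists l : Sym V N, forall x (w : {ffun N -> V}),
    (forall k : N, (g * val k)%g \in D -> w k = sigma p x (g * val k)%g) -> l w = x g.
Proof.
move=> D_mem DN.
pose P (w : {ffun N -> V}) v := exists x,
  (forall k : N, (g * val k)%g \in D -> w k = sigma p x (g * val k)%g) /\ x g = v.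
have [|a w1 v1 w2 v2 [x1 [w1x1 <-]] [x2 [w2x2 <-]]|v [x [w0x <-]]|l lP] :=
    @linear_relation_extension K _ V P.
- exists (fun _ => 0); split=> // k _.
  by rewrite ffunE (locop0 (@sigma_comb _ p) (@sigma_local _ p)).
- exists (fun h => a *: x1 h + x2 h); split=> // k Dk.
  by rewrite !ffunE sigma_comb w1x1 ?w2x2.
- apply: D_mem => n Dn; have := w0x [` DN n Dn]%fset; rewrite ffunE /= mulVKg => <- //.
- by exists l => x w wx; apply: lP; exists x.
Qed.

Lemma orbit_closure_refl (S : Type) (s : G -> S) : in_orbit_closure s s.
Proof. by move=> F; exists 1%g => h _; rewrite /shiftS invg1 mul1g. Qed.

Lemma asym_const_tail (S : Type) (s : G -> S) : asym_const s ->
  exists p, in_orbit_closure s p /\ forall D : {fset G},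
    exists E : {fset G}, forall g n, g \notin E -> n \in D -> s (g * n)%g = p n.
Proof.
case=> F sF; have [[U allU]|Ginf] := pselect (exists U : {fset G}, forall g, g \in U).
  by exists s; split=> [|D]; [exact: orbit_closure_refl|exists U => g n; rewrite allU].
have out (U : {fset G}) : exists g, g \notin U.
  apply: contrapT => allU; apply: Ginf; exists U => g.
  by apply: contrapT => /negP Ug; apply: allU; exists g.
have [g1 g1F] := out F.
have notF (g h : G) (U : {fset G}) :
    (g \notin [fset (h' * f^-1)%g | h' in U, f in F]%fset) -> h \in U -> (g^-1 * h)%g \notin F.
  move=> gUF hU; apply: contra gUF => ghF.
  have -> : g = (h * (g^-1 * h)^-1)%g by rewrite invgM invgK mulVKg.
  exact: in_imfset2.
exists (fun _ => s g1); split=> [F'|D].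
  have [g gF'] := out [fset (h * f^-1)%g | h in F', f in F]%fset.
  by exists g => h hF'; apply: sF => //; apply: notF gF' hF'.
exists [fset (f * n^-1)%g | f in F, n in D]%fset => g n gE nD; apply: sF => //.
apply: contra gE => gnF; rewrite -[g](mulgK n); exact: in_imfset2.
Qed.

End CellularAutomata.

Theorem theorem4p2 (G : groupType) (K : fieldType) (V : vectType K)
  (M : {fset G}) (s : G -> Sym V M) :
  asym_const s -> stably_injective s ->
  exists sig : (G -> V) -> (G -> V),
    LNUCAc sig /\ forall x : G -> V, sig (sigma s x) = x.
Proof.
move=> s_const s_stinj.
have memory (p : G -> Sym V M) :=
  locop_memory (@sigma_comb _ _ _ _ p) (@sigma_local _ _ _ _ p).
have [Nf Nf_mem] := choice (memory s (s_stinj _ (orbit_closure_refl s))).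
have [p [s_p s_tail]] := asym_const_tail s_const.
have [Nc Nc_mem] := memory p (s_stinj _ s_p) 1%g.
have [E far] := s_tail Nc.
pose N := (Nc `|` [fset (g^-1 * n)%g | g in E, n in Nf g])%fset.
have [|lc lcP] := @sigma_window_inverse _ _ _ _ p N Nc 1%g Nc_mem.
  by move=> n Ncn; rewrite invg1 mul1g in_fsetU Ncn.
have lf_ex g : exists l : Sym V N, g \in E ->
    forall x, l [ffun k : N => sigma s x (g * val k)%g] = x g.
  case: (boolP (g \in E)) => gE; last by exists lc.
  have [|l lP] := @sigma_window_inverse _ _ _ _ s N (Nf g) g (Nf_mem g).
    by move=> n ngn; rewrite in_fsetU; apply/orP; right; apply: in_imfset2.
  by exists l => _ x; apply: lP => k _; rewrite ffunE.
have [lf lfP] := choice lf_ex.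
exists (sigma (fun g => if g \in E then lf g else lc)); split.
  exists N, (fun g => if g \in E then lf g else lc); split=> //.
  by exists E => g h /negbTE -> /negbTE ->.
move=> x; apply/funext => g; rewrite {1}/sigma restr_shift; case: ifP => gE.
  exact: lfP.
rewrite (lcP (shift g^-1 x)) => [|k]; first by rewrite /shift invgK mulg1.
by rewrite ffunE mul1g => Nck; rewrite (sigma_shift x (far g (val k) _ Nck)) ?gE.
Qed.
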